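(* Let $(Y,D)$ be binary random variables and $Z$ a random vector, and define $\underline q_{10}=\inf_{z\in \mathrm{Supp}(Z)}\mathbb P(Y=1,D=0\mid Z=z)$, $\underline q_{11}=\inf_{z}\mathbb P(Y=1,D=1\mid Z=z)$, $\bar q_{10}=\sup_{z}\mathbb P(Y=1,D=0\mid Z=z)$, $\bar q_{11}=\sup_{z}\mathbb P(Y=1,D=1\mid Z=z)$ (assumed well defined). Then in the binary Roy model (and the alternative binary Roy model) with $(Y_0,Y_1)$ independent of $Z$, the identified set for the pair $(\mathbb EY_0,\mathbb EY_1)$ is given by $$\bar q_{10}\le \mathbb EY_0\le \mathbb P(Y=1)\quad\text{and}\quad \bar q_{11}\le \mathbb EY_1\le \mathbb P(Y=1);$$ that is, these inequalities hold for any $(Y_0,Y_1)$ compatible with the model and the distribution of $(Y,D,Z)$, and (when $Y$ is independent of $Z$) every pair $(a_0,a_1)$ satisfying them equals $(\mathbb EY_0,\mathbb EY_1)$ for some binary $(Y_0,Y_1)$, independent of $Z$, satisfying the model jointly with a random vector distributed as $(Y,D,Z)$.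
   Context: All random variables are on a common probability space. Binary Roy model: $Y_0,Y_1\in\{0,1\}$, $Y=Y_1D+Y_0(1-D)$, and almost surely $Y_1>Y_0\Rightarrow D=1$, $Y_1<Y_0\Rightarrow D=0$. Alternative binary Roy model: $Y=Y_1D+Y_0(1-D)$ with $Y_d=1\{Y_d^\ast>0\}$ for real latent $(Y_0^\ast,Y_1^\ast)$ and almost surely $Y_1^\ast>Y_0^\ast\Rightarrow D=1$, $Y_1^\ast<Y_0^\ast\Rightarrow D=0$. $\mathrm{Supp}(Z)$ is the support of $Z$. *)

From HB Require Import structures.
From mathcomp Require Import all_boot all_order all_algebra.
From mathcomp Require Import all_classical all_reals all_analysis.
Set Implicit Arguments. Unset Strict Implicit. Unset Printing Implicit Defensive.
Import Order.TTheory GRing.Theory Num.Theory.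
Local Open Scope classical_set_scope.
Local Open Scope ring_scope.

Section roy_defs.
Context {R : realType} {d : measure_display} {T : measurableType d}.
Variable P : probability T R.

(* the event {X = 1} for a binary (bool-valued, true = 1) random variable *)
Definition ev (X : T -> bool) : set T := [set t | X t].

Definition Ebin (X : T -> bool) : R := fine (P (ev X)).

(* q is a version of the conditional probability z |-> P(A | Z = z):
   q is measurable and P(A /\ Z \in B) = \int_{Z \in B} q(Z) dP for all Borel B *)
Definition cond_prob_version (k : nat) (A : set T) (Z : T -> k.-tuple R)
    (q : k.-tuple R -> R) : Prop :=
  measurable_fun setT q /\
  forall B : set (k.-tuple R), measurable B ->
    P (A `&` Z @^-1` B) = (\int[P]_(t in Z @^-1` B) (q (Z t))%:E)%E.

Definition tball (k : nat) (z : k.-tuple R) (e : R) : set (k.-tuple R) :=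
  [set w | forall i : 'I_k, `|tnth w i - tnth z i| < e].

Definition Supp (k : nat) (Z : T -> k.-tuple R) : set (k.-tuple R) :=
  [set z | forall e : R, 0 < e -> (0 < P (Z @^-1` tball z e))%E].

Definition continuous_on_set (k : nat) (S : set (k.-tuple R))
    (f : k.-tuple R -> R) : Prop :=
  forall z, S z -> forall eps : R, 0 < eps -> exists2 delta : R, 0 < delta &
    forall w, S w -> tball z delta w -> `|f w - f z| < eps.

Definition indep_pair_Z (k : nat) (Y0 Y1 : T -> bool) (Z : T -> k.-tuple R) :
    Prop :=
  forall (b0 b1 : bool) (B : set (k.-tuple R)), measurable B ->
    P ([set t | Y0 t = b0 /\ Y1 t = b1] `&` Z @^-1` B) =
    (P [set t | Y0 t = b0 /\ Y1 t = b1] * P (Z @^-1` B))%E.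

Definition indep_Z (k : nat) (Y : T -> bool) (Z : T -> k.-tuple R) : Prop :=
  forall (b : bool) (B : set (k.-tuple R)), measurable B ->
    P ([set t | Y t = b] `&` Z @^-1` B) =
    (P [set t | Y t = b] * P (Z @^-1` B))%E.

Definition binary_roy (Y D Y0 Y1 : T -> bool) : Prop :=
  (forall t, Y t = (if D t then Y1 t else Y0 t)) /\
  {ae P, forall t, (Y1 t && ~~ Y0 t) -> D t} /\
  {ae P, forall t, (Y0 t && ~~ Y1 t) -> ~~ D t}.

Definition latent_outcome (Ys : T -> R) : T -> bool := fun t => 0 < Ys t.

Definition alt_binary_roy (Y D : T -> bool) (Y0s Y1s : T -> R) : Prop :=
  (forall t, Y t = (if D t then latent_outcome Y1s t
                    else latent_outcome Y0s t)) /\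
  {ae P, forall t, Y0s t < Y1s t -> D t} /\
  {ae P, forall t, Y1s t < Y0s t -> ~~ D t}.

End roy_defs.

(* (Y', D', Z') under P' has the same joint law as (Y, D, Z) under P
   (equality on all measurable rectangles {b} x {c} x B, which generate the
   product sigma-algebra on bool * bool * R^k) *)
Definition same_law {R : realType} {d d' : measure_display}
    {T : measurableType d} {T' : measurableType d'} (k : nat)
    (P : probability T R) (P' : probability T' R)
    (Y D : T -> bool) (Z : T -> k.-tuple R)
    (Y' D' : T' -> bool) (Z' : T' -> k.-tuple R) : Prop :=
  forall (b c : bool) (B : set (k.-tuple R)), measurable B ->
    P' ([set t | Y' t = b /\ D' t = c] `&` Z' @^-1` B) =
    P ([set t | Y t = b /\ D t = c] `&` Z @^-1` B).

From HB Require Import structures.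
From mathcomp Require Import all_boot all_order all_algebra.
From mathcomp Require Import all_classical all_reals all_analysis.
From mathcomp Require Import lra measurable_realfun.
Set Implicit Arguments. Unset Strict Implicit. Unset Printing Implicit Defensive.
Import Order.TTheory GRing.Theory Num.Theory.
Local Open Scope classical_set_scope.
Local Open Scope ring_scope.

(* In the Roy model {Y = 1, D = 0} is contained in {Y0 = 1}; as Y0 is
   independent of Z this gives q10(Z) <= E Y0 a.s., and continuity of q10 on
   Supp Z, whose complement is Z-null, upgrades it to q10 <= E Y0 on Supp Z.
   Moreover Y0 = 1, Y = 0 forces D = 1 and Y1 = 0, which the model excludes
   a.s., so E Y0 <= P(Y = 1); Y1 is symmetric.  For sharpness, when Y is
   independent of Z, the conditional mass q10(Z) + q11(Z) = P(Y = 1) of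
   {Y = 1} is shared among types (D, Y0, Y1) with Z-dependent weights chosen
   so that the law of (Y, D, Z) is kept while the law of (Y0, Y1) no longer
   depends on Z; the alternative model is reached through the latent outcomes
   +1 and -1. *)

Lemma tball_rat_approx {R : realType} {k : nat} (z : k.-tuple R) (e : R) :
  0 < e -> exists p : k.-tuple rat * rat,
    tball (map_tuple ratr p.1) (ratr p.2) z /\
    tball (map_tuple ratr p.1) (ratr p.2) `<=` tball z e.
Proof.
move=> e0.
have [c cz] := fin_all_exists (fun i : 'I_k =>
  @rat_in_itvoo R (tnth z i - e / 3) (tnth z i + e / 3) ltac:(lra)).
have [r /andP[r1 r2]] : exists r : rat, e / 3 < ratr r < 2 * e / 3.
  have [r] := @rat_in_itvoo R (e / 3) (2 * e / 3) ltac:(lra).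
  by rewrite in_itv /=; exists r.
exists (mktuple c, r); split => [i|w wc i] /=.
  move: (cz i); rewrite tnth_map tnth_mktuple in_itv /= ltr_distlC; lra.
move: (cz i) (wc i); rewrite tnth_map tnth_mktuple in_itv /= !ltr_distlC; lra.
Qed.

Lemma ae_witness {R : realType} {d : measure_display} {T : measurableType d}
  {P : probability T R} {p : T -> Prop} : {ae P, forall t, p t} -> exists t, p t.
Proof.
move=> ae_p; apply: contrapT => no_p.
have : P [set: T] = 0%E.
  apply/negligibleP => //; apply: negligibleS ae_p => t _ pt.
  by apply: no_p; exists t.
by rewrite probability_setT => /eqP; rewrite onee_eq0.
Qed.

Section support.
Context {R : realType} {d : measure_display} {T : measurableType d}.
Variables (P : probability T R) (k : nat) (Z : T -> k.-tuple R).
Hypothesis mZ : measurable_fun setT Z.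

Lemma measurable_tball (z : k.-tuple R) e : measurable (tball z e).
Proof.
have -> : tball z e = \bigcap_(i in [set: 'I_k])
    ((fun w => tnth w i) @^-1` `]tnth z i - e, tnth z i + e[).
  by apply/seteqP; split => w /= wz i => [_|]; [|have := wz i I];
    rewrite /= in_itv /= -ltr_distlC distrC //; exact: wz.
apply: fin_bigcap_measurable => [|i _]; first exact: finite_finset.
by rewrite -[X in measurable X]setTI; exact: measurable_tnth.
Qed.

Lemma measurable_preimage {B : set (k.-tuple R)} :
  measurable B -> measurable (Z @^-1` B).
Proof. by move=> mB; rewrite -[X in measurable X]setTI; exact: mZ. Qed.

Lemma ae_in_Supp : {ae P, forall t, Supp P Z (Z t)}.
Proof.
(* the complement of Supp Z is covered by the Z-null balls with rational
   centre and radius, of which there are countably many *)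
pose ratball (p : k.-tuple rat * rat) := tball (map_tuple ratr p.1) (@ratr R p.2).
pose nullball n := if @unpickle (k.-tuple rat * rat)%type n is Some p then
  if P (Z @^-1` ratball p) == 0%E then Z @^-1` ratball p else set0 else set0.
apply: (@negligibleS _ _ _ _ (\bigcup_n nullball n)); last first.
  apply: negligible_bigcup => n; rewrite /nullball.
  case: unpickle => [p|]; last exact: negligible_set0.
  case: ifPn => [/eqP p0|_]; last exact: negligible_set0.
  by apply/negligibleP => //; apply: measurable_preimage; exact: measurable_tball.
move=> t /= notSupp.
have [e [e0 ballZt_null]] : exists e, 0 < e /\ P (Z @^-1` tball (Z t) e) = 0%E.
  apply: contra_notP notSupp => noe e e0; rewrite lt0e measure_ge0 andbT.
  by apply/eqP => e_null; apply: noe; exists e.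
have [p [pZt psub]] := tball_rat_approx (Z t) e0.
exists (pickle p) => //; rewrite /nullball pickleK.
suff /eqP -> : P (Z @^-1` ratball p) = 0%E by [].
have mball c r : measurable (Z @^-1` tball c r).
  by apply: measurable_preimage; exact: measurable_tball.
apply/eqP; rewrite eq_le measure_ge0 andbT -ballZt_null.
by apply: le_measure; rewrite ?inE; [exact: mball..|exact: preimage_subset].
Qed.

Lemma le_on_Supp (f : k.-tuple R -> R) (c : R) :
  continuous_on_set (Supp P Z) f -> {ae P, forall t, f (Z t) <= c} ->
  forall z, Supp P Z z -> f z <= c.
Proof.
move=> cf fZc z Sz; rewrite leNgt; apply/negP => cfz.
have [dl dl0 near_z] := cf z Sz (f z - c) ltac:(by rewrite subr_gt0).
suff : P.-negligible (Z @^-1` tball z dl).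
  move/(measure_negligible (measurable_preimage (measurable_tball z dl))).
  by move: (Sz dl dl0) => /[swap] ->; rewrite ltxx.
apply: negligibleS (negligibleU fZc ae_in_Supp) => t /= Zt_near.
have [SZt|] := pselect (Supp P Z (Z t)); [left|by right].
by move: (near_z _ SZt Zt_near); rewrite ltr_distlC /=; lra.
Qed.

Lemma Supp_neq0 : Supp P Z !=set0.
Proof. by have [t SZt] := ae_witness ae_in_Supp; exists (Z t). Qed.

End support.

Section ae_bounds.
Context {R : realType} {d : measure_display} {T : measurableType d}.
Variable P : probability T R.

Lemma measurable_fun_gt (f : T -> R) (a : R) :
  measurable_fun setT f -> measurable [set t | a < f t].
Proof.
by move=> mf; rewrite -preimage_itvoy -[X in measurable X]setTI; exact: mf.
Qed.

Lemma ae_le_of_negligible_gt (f : T -> R) (c : R) :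
  (forall e, 0 < e -> P.-negligible [set t | c + e < f t]) ->
  {ae P, forall t, f t <= c}.
Proof.
move=> fgt; have fgtn n := fgt n.+1%:R^-1 ltac:(by rewrite invr_gt0).
apply: negligibleS (negligible_bigcup fgtn).
by move=> t /= /negP; rewrite -ltNge => /ltr_add_invr[n cn]; exists n.
Qed.

Lemma measure0_of_scale_le {D : set T} {x y : R} : measurable D -> y < x ->
  (x%:E * P D <= y%:E * P D)%E -> P D = 0%E.
Proof.
move=> mD yx; rewrite -(fineK (fin_num_measure P D mD)) -!EFinM lee_fin => le_xy.
have : 0 <= fine (P D) by apply: fine_ge0; exact: measure_ge0.
by rewrite le_eqVlt => /predU1P[<-//|pD0]; move: le_xy; rewrite ler_pM2r // leNgt yx.
Qed.

End ae_bounds.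

Section cond_prob.
Context {R : realType} {d : measure_display} {T : measurableType d}.
Variables (P : probability T R) (k : nat) (Z : T -> k.-tuple R).
Hypothesis mZ : measurable_fun setT Z.
Variables (A : set T) (q : k.-tuple R -> R).
Hypothesis qA : cond_prob_version P A Z q.

Let mqZ : measurable_fun setT (q \o Z).
Proof. exact: measurableT_comp qA.1 mZ. Qed.

Let mqZ_EFin (D : set T) : measurable_fun D (fun t => (q (Z t))%:E).
Proof. by apply/measurable_EFinP; exact: measurable_funTS. Qed.

Lemma cond_prob_ae_le (c : R) : 0 <= c ->
  (forall B, measurable B -> (P (A `&` Z @^-1` B) <= c%:E * P (Z @^-1` B))%E) ->
  {ae P, forall t, q (Z t) <= c}.
Proof.
move=> c0 AleB; apply: ae_le_of_negligible_gt => e e0.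
pose D := [set t | c + e < q (Z t)].
have mD : measurable D by exact: measurable_fun_gt.
have ce : c < c + e by rewrite ltrDl.
apply/negligibleP => //; apply: (measure0_of_scale_le mD ce).
have -> : D = Z @^-1` [set w | c + e < q w] by [].
have mB : measurable [set w | c + e < q w] by exact: measurable_fun_gt qA.1.
apply: le_trans (AleB _ mB); rewrite qA.2 //.
rewrite -integral_cst //; apply: ge0_le_integral => //.
- by move=> t _; rewrite lee_fin; lra.
- by move=> t /ltW.
Qed.

Lemma cond_prob_ae_ge0 : {ae P, forall t, 0 <= q (Z t)}.
Proof.
have : {ae P, forall t, - q (Z t) <= 0}.
  apply: ae_le_of_negligible_gt => e e0.
  pose D := [set t | 0 + e < - q (Z t)].
  have mD : measurable D by apply: measurable_fun_gt; exact: measurableT_comp.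
  have mB : measurable [set w | 0 + e < - q w].
    by apply: measurable_fun_gt; exact: measurableT_comp qA.1.
  apply/negligibleP => //; apply: (measure0_of_scale_le mD e0); rewrite mul0e.
  have int_opp : (\int[P]_(t in D) (- q (Z t))%:E =
                  - \int[P]_(t in D) (q (Z t))%:E)%E.
    rewrite -[LHS]oppeK -integral_ge0N => [|t]; last first.
      by rewrite lee_fin /D /=; lra.
    by congr (- _)%E; apply: eq_integral => t _; rewrite /= opprK.
  apply: (@le_trans _ _ (\int[P]_(t in D) (- q (Z t))%:E)%E).
    rewrite -integral_cst //; apply: ge0_le_integral => //.
    - by move=> t _; rewrite lee_fin; lra.
    - by apply/measurable_EFinP; apply: measurable_funTS; exact: measurableT_comp.
    - by move=> t; rewrite lee_fin /D /=; lra.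
  rewrite int_opp oppe_le0 (_ : D = Z @^-1` [set w | 0 + e < - q w]) //.
  by rewrite -qA.2 //; exact: measure_ge0.
by apply: filterS => t; rewrite oppr_le0.
Qed.

Lemma integral_cst_sub_cond_prob (c : R) (B : set (k.-tuple R)) :
  measurable A -> measurable B -> (forall z, 0 <= q z <= c) ->
  (\int[P]_(t in Z @^-1` B) (c - q (Z t))%:E =
   (c * fine (P (Z @^-1` B)) - fine (P (A `&` Z @^-1` B)))%:E)%E.
Proof.
move=> mA mB qc; have mZB := measurable_preimage mZ mB.
have mAZB : measurable (A `&` Z @^-1` B) by exact: measurableI.
have : (\int[P]_(t in Z @^-1` B) ((c - q (Z t))%:E + (q (Z t))%:E) =
        c%:E * P (Z @^-1` B))%E.
  by under eq_integral do rewrite -EFinD subrK; exact: integral_cst.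
rewrite ge0_integralD //; first last.
- by move=> t _; rewrite lee_fin; case/andP: (qc (Z t)).
- by apply/measurable_EFinP; apply: measurable_funTS; apply: measurable_funB => //;
    exact: measurable_cst.
- by move=> t _; rewrite lee_fin subr_ge0; case/andP: (qc (Z t)).
rewrite -qA.2 // -(fineK (fin_num_measure P _ mZB)).
rewrite -(fineK (fin_num_measure P _ mAZB)).
by rewrite EFinB EFinM => <-; rewrite addeK.
Qed.

Lemma cond_prob_version_clip (a : R) : {ae P, forall t, 0 <= q (Z t) <= a} ->
  exists2 r, cond_prob_version P A Z r & forall z, 0 <= r z <= a.
Proof.
move=> qa; have [t /andP[q0 qa']] := ae_witness qa.
have a0 : 0 <= a := le_trans q0 qa'.
pose r z := Num.max 0 (Num.min (q z) a).
have mr : measurable_fun setT r.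
  by apply: measurable_maxr (measurable_minr qA.1 _); exact: measurable_cst.
exists r; last by move=> z; rewrite le_max lexx ge_max a0 ge_min lexx orbT.
split=> // B mB; rewrite qA.2 //; apply: ae_eq_integral => //.
- exact: measurable_preimage.
- by apply/measurable_EFinP; apply: measurable_funTS; exact: measurableT_comp.
- by apply: filterS qa => t' /andP[q0' qa''] _; rewrite /r min_l // max_r.
Qed.

End cond_prob.

Definition indep_event {R : realType} {d : measure_display}
    {T : measurableType d} (P : probability T R) {k : nat} (A : set T)
    (Z : T -> k.-tuple R) : Prop :=
  forall B, measurable B -> P (A `&` Z @^-1` B) = (P A * P (Z @^-1` B))%E.

Section binary_events.
Context {R : realType} {d : measure_display} {T : measurableType d}.
Variable P : probability T R.

Lemma measurable_bool_eq (X : T -> bool) (b : bool) :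
  measurable_fun setT X -> measurable [set t | X t = b].
Proof.
by move=> mX; rewrite -[S in measurable S]setTI; exact: (mX measurableT [set b]).
Qed.

Lemma EbinE (X : T -> bool) : measurable_fun setT X -> P (ev X) = (Ebin P X)%:E.
Proof.
by move=> mX; rewrite fineK // fin_num_measure //; exact: measurable_bool_eq.
Qed.

Lemma Ebin_le (X X' : T -> bool) : measurable_fun setT X -> measurable_fun setT X' ->
  P.-negligible (ev X `\` ev X') -> Ebin P X <= Ebin P X'.
Proof.
move=> mX mX' XX'; rewrite -lee_fin -!EbinE //.
have [mev mev'] := (measurable_bool_eq true mX, measurable_bool_eq true mX').
have mXX' : measurable (ev X `\` ev X') by exact: measurableD.
apply: (@le_trans _ _ (P (ev X' `|` (ev X `\` ev X')))).
  apply: le_measure; rewrite ?inE //; first exact: measurableU.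
  by move=> t Xt; have [|] := pselect (ev X' t); [left|right].
by rewrite (le_trans (measureU2 _ _ _)) // (measure_negligible mXX' XX') adde0.
Qed.

End binary_events.

Section independence.
Context {R : realType} {d : measure_display} {T : measurableType d}.
Variables (P : probability T R) (k : nat) (Z : T -> k.-tuple R).
Hypothesis mZ : measurable_fun setT Z.

Lemma measure_bool_split (W : T -> bool) (S : set T) :
  measurable_fun setT W -> measurable S ->
  P S = (P (S `&` [set t | W t = true]) + P (S `&` [set t | W t = false]))%E.
Proof.
move=> mW mS; rewrite -measureU; first last.
- by apply/seteqP; split => t // [[_ /= ->] [_ /=]].
- by apply: measurableI => //; exact: measurable_bool_eq.
- by apply: measurableI => //; exact: measurable_bool_eq.
rewrite -setIUr (_ : _ `|` _ = setT) ?setIT //.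
by apply/seteqP; split => // t _ /=; case: (W t); [left|right].
Qed.

Lemma indep_pair_Z_sym (Y0 Y1 : T -> bool) :
  indep_pair_Z P Y0 Y1 Z -> indep_pair_Z P Y1 Y0 Z.
Proof.
move=> ind b1 b0 B mB.
have -> : [set t | Y1 t = b1 /\ Y0 t = b0] = [set t | Y0 t = b0 /\ Y1 t = b1].
  by apply/seteqP; split => t [].
exact: ind.
Qed.

Lemma indep_pair_Z_of_factor (Y0 Y1 : T -> bool) :
  (forall b0 b1, exists kappa : R, forall B, measurable B ->
     P ([set t | Y0 t = b0 /\ Y1 t = b1] `&` Z @^-1` B) =
     (kappa%:E * P (Z @^-1` B))%E) ->
  indep_pair_Z P Y0 Y1 Z.
Proof.
move=> factor b0 b1 B mB; have [kappa kappaP] := factor b0 b1.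
have := kappaP setT measurableT; rewrite preimage_setT setIT probability_setT mule1.
by move=> ->; exact: kappaP.
Qed.

Lemma indep_pair_Z_fst (Y0 Y1 : T -> bool) :
  measurable_fun setT Y0 -> measurable_fun setT Y1 ->
  indep_pair_Z P Y0 Y1 Z -> indep_event P (ev Y0) Z.
Proof.
move=> mY0 mY1 ind B mB.
have mZB : measurable (Z @^-1` B) by exact: measurable_preimage.
have mY0B : measurable (ev Y0 `&` Z @^-1` B).
  by apply: measurableI => //; exact: measurable_bool_eq.
have cell c : ev Y0 `&` [set t | Y1 t = c] = [set t | Y0 t = true /\ Y1 t = c].
  by [].
rewrite (measure_bool_split mY1 mY0B).
rewrite (measure_bool_split mY1 (measurable_bool_eq _ mY0)).
rewrite -!setIA ![Z @^-1` B `&` _]setIC !setIA !cell !ind //.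
by rewrite ge0_muleDl //; exact: measure_ge0.
Qed.

Variables (A E : set T) (q : k.-tuple R -> R).
Hypotheses (mA : measurable A) (mE : measurable E) (AE : A `<=` E).
Hypotheses (indE : indep_event P E Z) (qA : cond_prob_version P A Z q).
Hypothesis cq : continuous_on_set (Supp P Z) q.

Lemma cond_prob_le_on_Supp z : Supp P Z z -> q z <= fine (P E).
Proof.
apply: le_on_Supp => //; apply: (cond_prob_ae_le mZ qA).
  exact/fine_ge0/measure_ge0.
move=> B mB; have mZB := measurable_preimage mZ mB.
rewrite fineK ?fin_num_measure // -indE //.
by apply: le_measure; rewrite ?inE; [exact: measurableI..|exact: setSI].
Qed.

Lemma sup_cond_prob_le : sup (q @` Supp P Z) <= fine (P E).
Proof.
have [z Sz] := Supp_neq0 P mZ.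
by apply: ge_sup => [|_ [w Sw <-]]; [exists (q z), z | exact: cond_prob_le_on_Supp].
Qed.

Lemma cond_prob_ae_between (a : R) : sup (q @` Supp P Z) <= a ->
  {ae P, forall t, 0 <= q (Z t) <= a}.
Proof.
move=> supa; apply: filterS2 (cond_prob_ae_ge0 mZ qA) (ae_in_Supp P mZ) => t -> SZt.
apply: le_trans supa; apply: ub_le_sup; last by exists (Z t).
by exists (fine (P E)) => _ [z Sz <-]; exact: cond_prob_le_on_Supp.
Qed.

End independence.

Section roy_model.
Context {R : realType} {d : measure_display} {T : measurableType d}.
Variables (P : probability T R) (Y D Y0 Y1 : T -> bool).
Hypothesis roy : binary_roy P Y D Y0 Y1.

Lemma binary_roy_untreated_sub : ev Y `&` ~` ev D `<=` ev Y0.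
Proof. by case: roy => Ydef _ t [+ /negP/negbTE Dt]; rewrite /ev /= Ydef Dt. Qed.

Lemma binary_roy_treated_sub : ev Y `&` ev D `<=` ev Y1.
Proof. by case: roy => Ydef _ t [+ Dt]; rewrite /ev /= Ydef Dt. Qed.

Lemma binary_roy_Y0_ae_sub : P.-negligible (ev Y0 `\` ev Y).
Proof.
case: roy => Ydef [_ ae0]; apply: negligibleS ae0 => t [+ + /= imp].
by rewrite /ev /= Ydef; case: (D t) (Y0 t) (Y1 t) imp => [] [] [] // /(_ erefl).
Qed.

Lemma binary_roy_Y1_ae_sub : P.-negligible (ev Y1 `\` ev Y).
Proof.
case: roy => Ydef [ae1 _]; apply: negligibleS ae1 => t [+ + /= imp].
by rewrite /ev /= Ydef; case: (D t) (Y0 t) (Y1 t) imp => [] [] [] // /(_ erefl).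
Qed.

End roy_model.

Lemma alt_binary_roy_latent {R : realType} {d : measure_display}
    {T : measurableType d} (P : probability T R) (Y D : T -> bool)
    (Y0s Y1s : T -> R) :
  alt_binary_roy P Y D Y0s Y1s ->
  binary_roy P Y D (latent_outcome Y0s) (latent_outcome Y1s).
Proof.
case=> Ydef [ae1 ae0]; split=> //; split; [apply: filterS ae1|apply: filterS ae0];
  by move=> t Y_D /andP[]; rewrite /latent_outcome -leNgt => ? ?; apply: Y_D; lra.
Qed.

Lemma measurable_latent_outcome {R : realType} {d : measure_display}
    {T : measurableType d} (Ys : T -> R) :
  measurable_fun setT Ys -> measurable_fun setT (latent_outcome Ys).
Proof. by move=> mYs; apply: measurable_fun_ltr => //; exact: measurable_cst. Qed.

Section validity.
Context {R : realType} {d : measure_display} {T : measurableType d}.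
Variables (P : probability T R) (k : nat) (Z : T -> k.-tuple R).
Hypothesis mZ : measurable_fun setT Z.
Variables (Y D : T -> bool) (q10 q11 : k.-tuple R -> R).
Hypotheses (mY : measurable_fun setT Y) (mD : measurable_fun setT D).
Hypotheses (qv10 : cond_prob_version P (ev Y `&` ~` ev D) Z q10)
  (qv11 : cond_prob_version P (ev Y `&` ev D) Z q11).
Hypotheses (cq10 : continuous_on_set (Supp P Z) q10)
  (cq11 : continuous_on_set (Supp P Z) q11).

Lemma binary_roy_Ebin_bounds (Y0 Y1 : T -> bool) :
  measurable_fun setT Y0 -> measurable_fun setT Y1 ->
  indep_pair_Z P Y0 Y1 Z -> binary_roy P Y D Y0 Y1 ->
  (sup (q10 @` Supp P Z) <= Ebin P Y0 <= Ebin P Y) /\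
  (sup (q11 @` Supp P Z) <= Ebin P Y1 <= Ebin P Y).
Proof.
move=> mY0 mY1 ind roy.
have [mYev mDev] := (measurable_bool_eq true mY, measurable_bool_eq true mD).
split; apply/andP; split.
- apply: (sup_cond_prob_le mZ _ (measurable_bool_eq true mY0)
    (binary_roy_untreated_sub roy) (indep_pair_Z_fst mZ mY0 mY1 ind) qv10 cq10).
  exact/measurableI/measurableC.
- exact/Ebin_le/(binary_roy_Y0_ae_sub roy).
- apply: (sup_cond_prob_le mZ _ (measurable_bool_eq true mY1)
    (binary_roy_treated_sub roy) _ qv11 cq11).
  + exact: measurableI.
  + exact/(indep_pair_Z_fst mZ mY1 mY0)/indep_pair_Z_sym.
- exact/Ebin_le/(binary_roy_Y1_ae_sub roy).
Qed.

End validity.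

(* The proof arguments [mf] and [f0] are unused in the body; they make the
   measure instance below canonical. *)
Definition tagged_density {d} {T : measurableType d} {R : realType}
    (mu : {measure set T -> \bar R}) (f : T -> R) (mf : measurable_fun setT f)
    (f0 : forall t, 0 <= f t) (i : nat) (A : set (T * nat)) : \bar R :=
  (\int[mu]_(t in ysection A i) (f t)%:E)%E.

Section tagged_density_measure.
Context {d} {T : measurableType d} {R : realType}.
Variables (mu : {measure set T -> \bar R}) (f : T -> R).
Variables (mf : measurable_fun setT f) (f0 : forall t, 0 <= f t) (i : nat).

Let tagged_density0 : tagged_density mu mf f0 i set0 = 0%E.
Proof. by rewrite /tagged_density ysection0 integral_set0. Qed.

Let tagged_density_ge0 A : (0 <= tagged_density mu mf f0 i A)%E.
Proof. by apply: integral_ge0 => t _; rewrite lee_fin. Qed.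

Let tagged_density_sigma_additive : semi_sigma_additive (tagged_density mu mf f0 i).
Proof.
move=> F mF tF mUF; rewrite /tagged_density; apply: cvg_toP.
  apply: is_cvg_nneseries => n _ _; apply: integral_ge0 => t _.
  by rewrite lee_fin.
rewrite ysection_bigcup ge0_integral_bigcup //=.
- by move=> n; exact: measurable_ysection.
- by apply/measurable_EFinP; exact: measurable_funTS.
- by move=> t _; rewrite lee_fin.
- exact: trivIset_ysection.
Qed.

HB.instance Definition _ := isMeasure.Build _ _ _ (tagged_density mu mf f0 i)
  tagged_density0 tagged_density_ge0 tagged_density_sigma_additive.

End tagged_density_measure.

Definition mixture {d} {T : measurableType d} {R : realType}
    (mu : {measure set T -> \bar R}) (n : nat) (F : nat -> T -> R)
    (mF : forall i, measurable_fun setT (F i)) (F0 : forall i t, 0 <= F i t)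
    (F1 : (\sum_(i < n) \int[mu]_t (F i t)%:E = 1)%E) : set (T * nat) -> \bar R :=
  msum (fun i => tagged_density mu (mF i) (F0 i) i) n.

Section mixture_probability.
Context {d} {T : measurableType d} {R : realType}.
Variables (mu : {measure set T -> \bar R}) (n : nat) (F : nat -> T -> R).
Variables (mF : forall i, measurable_fun setT (F i)) (F0 : forall i t, 0 <= F i t).
Variable F1 : (\sum_(i < n) \int[mu]_t (F i t)%:E = 1)%E.

HB.instance Definition _ := Measure.on (mixture mF F0 F1).

Let mixture_setT : mixture mF F0 F1 setT = 1%E.
Proof.
rewrite /mixture /msum -F1; apply: eq_bigr => i _.
rewrite /tagged_density.
congr (integral _ _ _); apply/seteqP; split => t // _.
by rewrite /ysection /= in_setT.
Qed.

HB.instance Definition _ :=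
  Measure_isProbability.Build _ _ R (mixture mF F0 F1) mixture_setT.

Lemma mixtureE (g : pred nat) (A : set T) :
  mixture mF F0 F1 [set x | A x.1 /\ g x.2] =
  (\sum_(i < n | g i) \int[mu]_(t in A) (F i t)%:E)%E.
Proof.
rewrite /mixture /msum [RHS]big_mkcond; apply: eq_bigr => i _ /=.
rewrite /tagged_density.
case: ifPn => gi.
  congr (\int[mu]_(t in _) _)%E; apply/seteqP.
  by split => t; rewrite /ysection /= in_setE //; case.
rewrite -(integral_set0 mu (fun t => (F i t)%:E)); congr (\int[mu]_(t in _) _)%E.
by apply/seteqP; split => t //; rewrite /ysection /= in_setE => -[_]; apply/negP.
Qed.

End mixture_probability.

Definition binary_roy_compatible {R : realType} {d : measure_display}
    {T : measurableType d} (P : probability T R) {k : nat} (Y D : T -> bool)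
    (Z : T -> k.-tuple R) (a0 a1 : R) : Prop :=
  exists (d' : measure_display) (T' : measurableType d')
         (P' : probability T' R) (Y' D' Y0 Y1 : T' -> bool)
         (Z' : T' -> k.-tuple R),
    [/\ measurable_fun setT Y', measurable_fun setT D',
        measurable_fun setT Z', measurable_fun setT Y0
      & measurable_fun setT Y1] /\
    same_law P P' Y D Z Y' D' Z' /\
    indep_pair_Z P' Y0 Y1 Z' /\ binary_roy P' Y' D' Y0 Y1 /\
    Ebin P' Y0 = a0 /\ Ebin P' Y1 = a1.

Definition alt_binary_roy_compatible {R : realType} {d : measure_display}
    {T : measurableType d} (P : probability T R) {k : nat} (Y D : T -> bool)
    (Z : T -> k.-tuple R) (a0 a1 : R) : Prop :=
  exists (d' : measure_display) (T' : measurableType d')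
         (P' : probability T' R) (Y' D' : T' -> bool)
         (Y0s Y1s : T' -> R) (Z' : T' -> k.-tuple R),
    [/\ measurable_fun setT Y', measurable_fun setT D',
        measurable_fun setT Z', measurable_fun setT Y0s
      & measurable_fun setT Y1s] /\
    same_law P P' Y D Z Y' D' Z' /\
    indep_pair_Z P' (latent_outcome Y0s) (latent_outcome Y1s) Z' /\
    alt_binary_roy P' Y' D' Y0s Y1s /\
    Ebin P' (latent_outcome Y0s) = a0 /\ Ebin P' (latent_outcome Y1s) = a1.

Definition D_cell (i : nat) : bool := if i is (1 | 4 | 5) then true else false.
Definition Y0_cell (i : nat) : bool := if i is (2 | 3 | 4) then true else false.
Definition Y1_cell (i : nat) : bool := if i is (2 | 4 | 5) then true else false.
Definition Y_cell (i : nat) : bool := if D_cell i then Y1_cell i else Y0_cell i.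

Section sharpness.
Context {R : realType} {d : measure_display} {T : measurableType d}.
Variables (P : probability T R) (k : nat) (Z : T -> k.-tuple R).
Hypothesis mZ : measurable_fun setT Z.
Variables (Y D : T -> bool) (a0 a1 : R) (r10 r11 : k.-tuple R -> R).
Hypotheses (mY : measurable_fun setT Y) (mD : measurable_fun setT D).
Hypothesis indY : indep_Z P Y Z.
Hypotheses (rv10 : cond_prob_version P (ev Y `&` ~` ev D) Z r10)
  (rv11 : cond_prob_version P (ev Y `&` ev D) Z r11).
Hypotheses (r10_bounds : forall z, 0 <= r10 z <= a0)
  (r11_bounds : forall z, 0 <= r11 z <= a1).
Hypotheses (a0Y : a0 <= Ebin P Y) (a1Y : a1 <= Ebin P Y).

Let pY := Ebin P Y.
Let E (b c : bool) := [set t | Y t = b /\ D t = c].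
Let pZ (B : set (k.-tuple R)) := fine (P (Z @^-1` B)).
Let pE b c (B : set (k.-tuple R)) := fine (P (E b c `&` Z @^-1` B)).

Let mE b c : measurable (E b c).
Proof. exact: measurableI (measurable_bool_eq b mY) (measurable_bool_eq c mD). Qed.

Let mEZ b c B : measurable B -> measurable (E b c `&` Z @^-1` B).
Proof. by move=> mB; apply: measurableI (mE b c) (measurable_preimage mZ mB). Qed.

Let pZE B : measurable B -> P (Z @^-1` B) = (pZ B)%:E.
Proof.
by move=> mB; rewrite fineK // fin_num_measure //; exact: measurable_preimage.
Qed.

Let pEE b c B : measurable B -> P (E b c `&` Z @^-1` B) = (pE b c B)%:E.
Proof. by move=> mB; rewrite fineK // fin_num_measure //; exact: mEZ. Qed.

Let E10E : ev Y `&` ~` ev D = E true false.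
Proof.
apply/seteqP; split => t [Yt Dt]; split => //; first exact/negbTE/negP.
by apply/negP; rewrite Dt.
Qed.

Let pE_sum b B : measurable B ->
  pE b true B + pE b false B = (if b then pY else 1 - pY) * pZ B.
Proof.
move=> mB; have mZB := measurable_preimage mZ mB.
have Yb : P [set t | Y t = b] = (if b then pY else 1 - pY)%:E.
  case: b; first exact: EbinE.
  rewrite EFinB -EbinE // -probability_setC; last exact: measurable_bool_eq.
  congr (P _); apply/seteqP; split => t; rewrite /ev /=.
  - by move=> ->.
  - by move/negP/negbTE.
apply: EFin_inj; rewrite EFinD EFinM -Yb -!pEE // -pZE //.
rewrite -indY // [RHS](measure_bool_split P mD); last first.
  exact: measurableI (measurable_bool_eq b mY) mZB.
by congr (P _ + P _)%E; apply/seteqP; split => t; rewrite /E /=; tauto.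
Qed.

(* Types i = 0, ..., 5 have (D, Y0, Y1) = (0,0,0), (1,0,0), (0,1,1), (0,1,0),
   (1,1,1), (1,0,1).  Given Z, types 2 and 3 carry (a1 - r11) + (P(Y=1) - a1)
   = r10 and types 4 and 5 carry r11, while (Y0, Y1) = (1,1), (1,0), (0,1),
   (0,0) get the Z-free masses a0 + a1 - P(Y=1), P(Y=1) - a1, P(Y=1) - a0 and
   1 - P(Y=1). *)
Let weight (i : nat) (t : T) : R :=
  match i with
  | 0 => \1_(E false false) t
  | 1 => \1_(E false true) t
  | 2 => a1 - r11 (Z t)
  | 3 => pY - a1
  | 4 => a0 - r10 (Z t)
  | 5 => pY - a0
  | _ => 0
  end.

Let cell_mass (i : nat) (B : set (k.-tuple R)) : R :=
  match i with
  | 0 => pE false false B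
  | 1 => pE false true B
  | 2 => a1 * pZ B - pE true true B
  | 3 => (pY - a1) * pZ B
  | 4 => a0 * pZ B - pE true false B
  | 5 => (pY - a0) * pZ B
  | _ => 0
  end.

Let measurable_weight i : measurable_fun setT (weight i).
Proof.
have mr11 := measurableT_comp rv11.1 mZ; have mr10 := measurableT_comp rv10.1 mZ.
case: i => [|[|[|[|[|[|i]]]]]] /=; try exact: measurable_cst.
- exact: measurable_indic.
- exact: measurable_indic.
- by apply: measurable_funB => //; exact: measurable_cst.
- by apply: measurable_funB => //; exact: measurable_cst.
Qed.

Let weight_ge0 i t : 0 <= weight i t.
Proof.
have [/andP[_ ?] /andP[_ ?]] := (r10_bounds (Z t), r11_bounds (Z t)).
by case: i => [|[|[|[|[|[|i]]]]]] /=; rewrite ?indicE ?ler0n ?subr_ge0.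
Qed.

Let integral_weight i B : measurable B ->
  (\int[P]_(t in Z @^-1` B) (weight i t)%:E = (cell_mass i B)%:E)%E.
Proof.
move=> mB; have mZB := measurable_preimage mZ mB.
have mYD : measurable (ev Y `&` ev D).
  exact: measurableI (measurable_bool_eq true mY) (measurable_bool_eq true mD).
case: i => [|[|[|[|[|[|i]]]]]] /=.
- by rewrite integral_indic //; exact: pEE.
- by rewrite integral_indic //; exact: pEE.
- exact: (integral_cst_sub_cond_prob mZ rv11 mYD mB r11_bounds).
- by rewrite integral_cst // EFinM -pZE.
- have mYnD : measurable (ev Y `&` ~` ev D) by rewrite E10E; exact: mE.
  by rewrite (integral_cst_sub_cond_prob mZ rv10 mYnD mB r10_bounds) E10E.
- by rewrite integral_cst // EFinM -pZE.
- by rewrite integral0.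
Qed.

Let pZT : pZ setT = 1.
Proof. by rewrite /pZ preimage_setT probability_setT. Qed.

Let weight_sum1 : (\sum_(i < 6) \int[P]_t (weight i t)%:E = 1)%E.
Proof.
under eq_bigr do rewrite -(preimage_setT Z) integral_weight //.
rewrite sumEFin !big_ord_recr big_ord0 /=; congr EFin.
have := pE_sum true measurableT; have := pE_sum false measurableT.
by rewrite pZT; lra.
Qed.

Let P' : probability (T * nat)%type R :=
  mixture measurable_weight weight_ge0 weight_sum1.

Let Z' (x : T * nat) := Z x.1.

Let mixture_cells (g : pred nat) B : measurable B ->
  P' ([set x | g x.2] `&` Z' @^-1` B) = (\sum_(i < 6 | g i) cell_mass i B)%:E.
Proof.
move=> mB; rewrite setIC; apply: etrans (mixtureE _ _ weight_sum1 g (Z @^-1` B)) _.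
by rewrite -sumEFin; apply: eq_bigr => i _; exact: integral_weight.
Qed.

Let Z'_cells B : measurable B -> P' (Z' @^-1` B) = (pZ B)%:E.
Proof.
move=> mB; rewrite -[Z' @^-1` B]setTI (_ : setT = [set x | predT x.2]); last first.
  by apply/seteqP.
rewrite (mixture_cells predT) //; congr EFin; rewrite !big_ord_recr big_ord0 /=.
by have := pE_sum true mB; have := pE_sum false mB; lra.
Qed.

Let all_cells (g : pred nat) :
  P' [set x | g x.2] = (\sum_(i < 6 | g i) cell_mass i setT)%:E.
Proof. by rewrite -mixture_cells // preimage_setT setIT. Qed.

Let pair_cells (f1 f2 : nat -> bool) (b c : bool) B : measurable B ->
  P' ([set x | f1 x.2 = b /\ f2 x.2 = c] `&` Z' @^-1` B) =
  (\sum_(i < 6 | (f1 i == b) && (f2 i == c)) cell_mass i B)%:E.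
Proof.
move=> mB; rewrite -(mixture_cells (fun i => (f1 i == b) && (f2 i == c))) //.
congr (P' (_ `&` _)); apply/seteqP; split => x /=.
  by case=> -> ->; rewrite !eqxx.
by case/andP=> /eqP -> /eqP ->.
Qed.

Lemma binary_roy_sharp : binary_roy_compatible P Y D Z a0 a1.
Proof.
have cell_mf (f : nat -> bool) : measurable_fun setT (fun x : T * nat => f x.2).
  exact: measurableT_comp.
exists _, _, P', (fun x => Y_cell x.2), (fun x => D_cell x.2),
  (fun x => Y0_cell x.2), (fun x => Y1_cell x.2), Z'.
split; first by split; rewrite ?cell_mf //; exact: measurableT_comp mZ measurable_fst.
split.
  move=> b c B mB; rewrite pair_cells // pEE //; congr EFin.
  have := pE_sum true mB; have := pE_sum false mB.
  by case: b; case: c; rewrite big_mkcond !big_ord_recr big_ord0 /=; lra.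
split.
  apply: indep_pair_Z_of_factor => b0 b1.
  case: b0; case: b1;
    [exists (a0 + a1 - pY)|exists (pY - a1)|exists (pY - a0)|exists (1 - pY)];
    move=> B mB; rewrite pair_cells // Z'_cells // -EFinM; congr EFin;
    have := pE_sum true mB; have := pE_sum false mB;
    by rewrite big_mkcond !big_ord_recr big_ord0 /=; lra.
split.
  by split=> //; split; apply: aeW => -[t [|[|[|[|[|[|i]]]]]]].
have := pE_sum true measurableT; rewrite pZT => pE1.
by split; rewrite /Ebin all_cells /= big_mkcond !big_ord_recr big_ord0 /= pZT; lra.
Qed.

End sharpness.

Section sign_latent.
Context {R : realType} {d : measure_display} {T : measurableType d}.

Definition sign_latent (X : T -> bool) : T -> R := fun t => if X t then 1 else -1.

Lemma latent_outcome_sign (X : T -> bool) : latent_outcome (sign_latent X) = X.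
Proof.
by apply/funext => t; rewrite /latent_outcome /sign_latent; case: (X t); lra.
Qed.

Lemma measurable_sign_latent (X : T -> bool) :
  measurable_fun setT X -> measurable_fun setT (sign_latent X).
Proof.
by move=> mX; apply: (measurableT_comp (f := fun b : bool => if b then 1 else -1 : R)).
Qed.

Lemma binary_roy_sign_latent (P : probability T R) (Y D Y0 Y1 : T -> bool) :
  binary_roy P Y D Y0 Y1 -> alt_binary_roy P Y D (sign_latent Y0) (sign_latent Y1).
Proof.
case=> Ydef [ae1 ae0]; split; first by move=> t; rewrite !latent_outcome_sign.
split; [apply: filterS ae1|apply: filterS ae0] => t;
  by rewrite /sign_latent; case: (Y0 t) (Y1 t) => [] [] /= imp lt;
    first [exact: imp | exfalso; lra].
Qed.

End sign_latent.

Lemma alt_binary_roy_compatible_sign {R : realType} {d : measure_display}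
    {T : measurableType d} (P : probability T R) (k : nat)
    (Y D : T -> bool) (Z : T -> k.-tuple R) (a0 a1 : R) :
  binary_roy_compatible P Y D Z a0 a1 -> alt_binary_roy_compatible P Y D Z a0 a1.
Proof.
case=> d' [T' [P' [Y' [D' [Y0 [Y1 [Z' [[mY' mD' mZ' mY0 mY1] [law [ind [roy]]]]]]]]]]].
exists d', T', P', Y', D', (sign_latent Y0), (sign_latent Y1), Z'.
rewrite !latent_outcome_sign; split.
  by split => //; exact: measurable_sign_latent.
by do 2 split=> //; split; first exact: binary_roy_sign_latent.
Qed.

Theorem corollary2 (R : realType) (d : measure_display) (T : measurableType d)
  (P : probability T R) (k : nat)
  (Y D : T -> bool) (Z : T -> k.-tuple R) (q10 q11 : k.-tuple R -> R) :
  measurable_fun setT Y -> measurable_fun setT D -> measurable_fun setT Z ->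
  (* q10 z = P(Y=1, D=0 | Z=z), q11 z = P(Y=1, D=1 | Z=z) *)
  cond_prob_version P (ev Y `&` ~` ev D) Z q10 ->
  cond_prob_version P (ev Y `&` ev D) Z q11 ->
  (* well-definedness of the sup over the support *)
  continuous_on_set (Supp P Z) q10 -> continuous_on_set (Supp P Z) q11 ->
  let qbar10 := sup (q10 @` Supp P Z) in
  let qbar11 := sup (q11 @` Supp P Z) in
  (* validity of the bounds, binary Roy model *)
  (forall Y0 Y1 : T -> bool,
     measurable_fun setT Y0 -> measurable_fun setT Y1 ->
     indep_pair_Z P Y0 Y1 Z -> binary_roy P Y D Y0 Y1 ->
     (qbar10 <= Ebin P Y0 <= Ebin P Y) /\ (qbar11 <= Ebin P Y1 <= Ebin P Y)) /\
  (* validity of the bounds, alternative binary Roy model *)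
  (forall Y0s Y1s : T -> R,
     measurable_fun setT Y0s -> measurable_fun setT Y1s ->
     indep_pair_Z P (latent_outcome Y0s) (latent_outcome Y1s) Z ->
     alt_binary_roy P Y D Y0s Y1s ->
     (qbar10 <= Ebin P (latent_outcome Y0s) <= Ebin P Y) /\
     (qbar11 <= Ebin P (latent_outcome Y1s) <= Ebin P Y)) /\
  (* sharpness, binary Roy model *)
  (indep_Z P Y Z -> forall a0 a1 : R,
     qbar10 <= a0 <= Ebin P Y -> qbar11 <= a1 <= Ebin P Y ->
     exists (d' : measure_display) (T' : measurableType d')
            (P' : probability T' R) (Y' D' Y0 Y1 : T' -> bool)
            (Z' : T' -> k.-tuple R),
       [/\ measurable_fun setT Y', measurable_fun setT D',
           measurable_fun setT Z', measurable_fun setT Y0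
         & measurable_fun setT Y1] /\
       same_law P P' Y D Z Y' D' Z' /\
       indep_pair_Z P' Y0 Y1 Z' /\ binary_roy P' Y' D' Y0 Y1 /\
       Ebin P' Y0 = a0 /\ Ebin P' Y1 = a1) /\
  (* sharpness, alternative binary Roy model *)
  (indep_Z P Y Z -> forall a0 a1 : R,
     qbar10 <= a0 <= Ebin P Y -> qbar11 <= a1 <= Ebin P Y ->
     exists (d' : measure_display) (T' : measurableType d')
            (P' : probability T' R) (Y' D' : T' -> bool)
            (Y0s Y1s : T' -> R) (Z' : T' -> k.-tuple R),
       [/\ measurable_fun setT Y', measurable_fun setT D',
           measurable_fun setT Z', measurable_fun setT Y0s
         & measurable_fun setT Y1s] /\
       same_law P P' Y D Z Y' D' Z' /\
       indep_pair_Z P' (latent_outcome Y0s) (latent_outcome Y1s) Z' /\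
       alt_binary_roy P' Y' D' Y0s Y1s /\
       Ebin P' (latent_outcome Y0s) = a0 /\ Ebin P' (latent_outcome Y1s) = a1).
Proof.
move=> mY mD mZ qv10 qv11 cq10 cq11 qbar10 qbar11.
have valid := binary_roy_Ebin_bounds mZ mY mD qv10 qv11 cq10 cq11.
have sharp a0 a1 : indep_Z P Y Z -> qbar10 <= a0 <= Ebin P Y ->
    qbar11 <= a1 <= Ebin P Y -> binary_roy_compatible P Y D Z a0 a1.
  move=> indY /andP[sup0 a0Y] /andP[sup1 a1Y].
  have [mYev mDev] := (measurable_bool_eq true mY, measurable_bool_eq true mD).
  have mYnD := measurableI _ _ mYev (measurableC mDev).
  have mYD := measurableI _ _ mYev mDev.
  have [r10 rv10 r10b] := cond_prob_version_clip mZ qv10 (cond_prob_ae_between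
    mZ mYnD mYev (@subIsetl _ _ _) (indY true) qv10 cq10 sup0).
  have [r11 rv11 r11b] := cond_prob_version_clip mZ qv11 (cond_prob_ae_between
    mZ mYD mYev (@subIsetl _ _ _) (indY true) qv11 cq11 sup1).
  exact: (binary_roy_sharp mZ mY mD indY rv10 rv11 r10b r11b a0Y a1Y).
split; first exact: valid.
split.
  move=> Y0s Y1s mY0s mY1s ind /alt_binary_roy_latent roy.
  by apply: valid ind roy; exact: measurable_latent_outcome.
split=> indY a0 a1 ha0 ha1; first exact: sharp.
exact/alt_binary_roy_compatible_sign/sharp.
Qed.
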